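(* Consider the following two-player game with parameters $N\ge 1$ (number of bins), a positive integer $b\ge 1$, and thresholds $k>k'\ge 0$. Initially there are $N$ bins, each containing at most $k'$ balls. In each round, first Player I removes a bin of largest size (number of balls) among the remaining bins, and then Player II adds balls to the remaining bins, at most $b$ balls in total in that round, distributed arbitrarily. Player II wins if at some moment some remaining bin contains $k$ balls; Player I wins if all bins are removed before this happens. If $b<\frac{k-k'}{\ln N+1}$, then Player I wins against every strategy of Player II. *)

From Stdlib Require Import Reals List Arith.
Import ListNotations.

(* A configuration of the game is the list of sizes of the remaining bins. *)

Definition remove_nth (i : nat) (s : list nat) : list nat :=
  firstn i s ++ skipn (S i) s.

Fixpoint add_balls (s a : list nat) : list nat :=
  match s, a with
  | x :: s', y :: a' => (x + y) :: add_balls s' a'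
  | _, _ => s
  end.

Definition game_round (b : nat) (s s' : list nat) : Prop :=
  exists i : nat, i < length s /\ nth i s 0 = list_max s /\
  exists a : list nat, length a = length (remove_nth i s) /\
    list_sum a <= b /\ s' = add_balls (remove_nth i s) a.

(* Track, for every set S of j >= 1 remaining bins, the
   bound  sum_S <= j k' + b j (H_(N-1) - H_(j-1)),  H the harmonic numbers.  After a round, a set S of j remaining bins together
   with the removed (largest) bin formed a set of j + 1 bins; the largest bin
   is at least the mean of S, so S held at most a fraction j/(j+1) of the old
   bound for j + 1 bins, which is exactly b less than the bound for j.  Hence
   Player II's b new balls keep the invariant.  For a single bin it reads
   x <= k' + b H_(N-1) <= k' + b (ln N + 1) < k. *)

From Stdlib Require Import Reals List Arith.
From Stdlib Require Import Lra Lia.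

(* A subset of the bins is a boolean mask; missing mask entries count as false. *)
Fixpoint masked_sum (m : list bool) (s : list nat) : nat :=
  match m, s with
  | c :: m', x :: s' => (if c then x else 0) + masked_sum m' s'
  | _, _ => 0
  end.

Fixpoint masked_count (m : list bool) (s : list nat) : nat :=
  match m, s with
  | c :: m', x :: s' => (if c then 1 else 0) + masked_count m' s'
  | _, _ => 0
  end.

(* The mask [m] on [remove_nth i s], extended to [s] by also selecting bin [i]. *)
Fixpoint mask_insert (i : nat) (m : list bool) : list bool :=
  match i with
  | 0 => true :: m
  | S i' => hd false m :: mask_insert i' (tl m)
  end.

Lemma remove_nth_S i x s : remove_nth (S i) (x :: s) = x :: remove_nth i s.
Proof. reflexivity. Qed.

Lemma Forall_remove_nth (P : nat -> Prop) i : forall s,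
  Forall P s -> Forall P (remove_nth i s).
Proof.
  induction i as [|i IH]; intros [|x s] Hs; inversion Hs; subst.
  - constructor.
  - assumption.
  - constructor.
  - rewrite remove_nth_S; constructor; auto.
Qed.

Lemma masked_mask_insert i : forall s m, i < length s ->
  masked_sum (mask_insert i m) s = nth i s 0 + masked_sum m (remove_nth i s) /\
  masked_count (mask_insert i m) s = S (masked_count m (remove_nth i s)).
Proof.
  induction i as [|i IH]; intros [|x s] m Hi; simpl in Hi; try lia.
  - unfold remove_nth; simpl; lia.
  - rewrite remove_nth_S.
    destruct (IH s (tl m) ltac:(lia)) as [Hsum Hcount].
    destruct m as [|[|] m]; simpl in *; rewrite Hsum, Hcount; lia.
Qed.

Lemma masked_add_balls : forall s a m, length a = length s ->
  masked_sum m (add_balls s a) <= masked_sum m s + list_sum a /\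
  masked_count m (add_balls s a) = masked_count m s.
Proof.
  induction s as [|x s IH]; intros [|y a] m Ha; simpl in Ha; try lia.
  - destruct m; simpl; lia.
  - destruct m as [|c m]; simpl; [lia|].
    destruct (IH a m ltac:(lia)); destruct c; lia.
Qed.

Lemma masked_sum_le_count_mul M : forall s m, Forall (fun x => x <= M) s ->
  masked_sum m s <= masked_count m s * M.
Proof.
  induction s as [|x s IH]; intros [|c m] Hs; simpl; try lia.
  inversion Hs; subst; specialize (IH m ltac:(assumption)); destruct c; lia.
Qed.

Lemma masked_count_le_length : forall s m, masked_count m s <= length s.
Proof.
  induction s as [|x s IH]; intros [|c m]; simpl; try lia.
  specialize (IH m); destruct c; lia.
Qed.

Open Scope R_scope.

Fixpoint harmonic (n : nat) : R :=
  match n with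
  | O => 0
  | S n' => harmonic n' + / INR (S n')
  end.

Lemma harmonic_le n p : (n <= p)%nat -> harmonic n <= harmonic p.
Proof.
  induction 1 as [|p _ IH]; [lra|].
  change (harmonic (S p)) with (harmonic p + / INR (S p)).
  assert (0 < / INR (S p)) by (apply Rinv_0_lt_compat, lt_0_INR; lia); lra.
Qed.

Lemma ln_le_sub1 y : 0 < y -> ln y <= y - 1.
Proof. intros Hy; pose proof (exp_ineq1_le (ln y)); rewrite exp_ln in *; lra. Qed.

Lemma harmonic_le_ln_add1 n : (1 <= n)%nat -> harmonic n <= ln (INR n) + 1.
Proof.
  induction n as [|[|n] IH]; intros Hn; [lia| simpl; rewrite ln_1; lra |].
  specialize (IH ltac:(lia)); change (harmonic (S (S n)))
    with (harmonic (S n) + / INR (S (S n))).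
  set (a := INR (S n)) in *; set (c := INR (S (S n))).
  assert (0 < a) by (apply lt_0_INR; lia).
  assert (Hc : c = a + 1) by (unfold a, c; rewrite (S_INR (S n)); lra).
  (* 1/c = 1 - a/c <= -ln (a/c) = ln c - ln a *)
  assert (Hln : ln (a / c) <= a / c - 1) by (apply ln_le_sub1, Rdiv_lt_0_compat; lra).
  unfold Rdiv in Hln; rewrite ln_mult, ln_Rinv in Hln by (try apply Rinv_0_lt_compat; lra).
  assert (a * / c - 1 = - / c) by (rewrite Hc; field; lra).
  lra.
Qed.

Lemma harmonic_pred_le_ln_add1 N : (1 <= N)%nat -> harmonic (N - 1) <= ln (INR N) + 1.
Proof.
  intros HN; destruct (Nat.eq_dec N 1) as [->|HN1].
  - simpl; rewrite ln_1; lra.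
  - apply Rle_trans with (ln (INR (N - 1)) + 1); [apply harmonic_le_ln_add1; lia|].
    apply Rplus_le_compat_r, Rlt_le, ln_increasing; [apply lt_0_INR | apply lt_INR]; lia.
Qed.

Lemma sum_le_of_max_bound (j S M F : R) :
  0 < j -> S <= j * M -> S + M <= F -> (j + 1) * S <= j * F.
Proof. intros; nra. Qed.

Section Invariant.
Variables (N b k' : nat).

Definition subset_bound (j : nat) : R :=
  INR j * INR k' + INR b * INR j * (harmonic (N - 1) - harmonic (pred j)).

Definition subset_sums_bounded (s : list nat) : Prop :=
  forall m, (1 <= masked_count m s)%nat ->
  INR (masked_sum m s) <= subset_bound (masked_count m s).

Lemma subset_bound_succ j : (1 <= j)%nat ->
  INR j * subset_bound (S j) = (INR j + 1) * (subset_bound j - INR b).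
Proof.
  intros Hj; unfold subset_bound; destruct j as [|j]; [lia|].
  simpl pred; change (harmonic (S j)) with (harmonic j + / INR (S j)).
  rewrite (S_INR (S j)); field.
  apply not_0_INR; lia.
Qed.

Lemma subset_bound_one : subset_bound 1 = INR k' + INR b * harmonic (N - 1).
Proof. unfold subset_bound; simpl; ring. Qed.

Lemma subset_sums_bounded_init s : length s = N ->
  Forall (fun x => x <= k')%nat s -> subset_sums_bounded s.
Proof.
  intros Hlen Hs m Hm; unfold subset_bound.
  pose proof (masked_count_le_length s m).
  set (j := masked_count m s) in *.
  assert (Hsum : INR (masked_sum m s) <= INR j * INR k')
    by (rewrite <- mult_INR; apply le_INR, masked_sum_le_count_mul, Hs).
  assert (harmonic (pred j) <= harmonic (N - 1)) by (apply harmonic_le; lia).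
  assert (0 <= INR b * INR j) by (apply Rmult_le_pos; apply pos_INR).
  nra.
Qed.

Lemma subset_sums_bounded_round s s' :
  subset_sums_bounded s -> game_round b s s' -> subset_sums_bounded s'.
Proof.
  intros Hinv [i [Hi [Hmax [a [Ha [Hsum ->]]]]]] m Hm.
  set (t := remove_nth i s) in *.
  destruct (masked_add_balls t a m Ha) as [Hadd Hcount]; rewrite Hcount in *.
  destruct (masked_mask_insert i s m Hi) as [Hins_sum Hins_count].
  fold t in Hins_sum, Hins_count.
  set (j := masked_count m t) in *; set (S0 := masked_sum m t) in *.
  assert (Hold : INR S0 + INR (nth i s 0%nat) <= subset_bound (S j)).
  { rewrite Rplus_comm, <- plus_INR, <- Hins_sum, <- Hins_count; apply Hinv; lia. }
  assert (Hdom : INR S0 <= INR j * INR (nth i s 0%nat)).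
  { rewrite <- mult_INR; apply le_INR, masked_sum_le_count_mul.
    apply Forall_remove_nth, list_max_le; lia. }
  assert (Hj : 0 < INR j) by (apply lt_0_INR; lia).
  pose proof (sum_le_of_max_bound _ _ _ _ Hj Hdom Hold) as Hmean.
  rewrite (subset_bound_succ j ltac:(lia)) in Hmean.
  apply le_INR in Hadd, Hsum; rewrite plus_INR in Hadd.
  assert (INR S0 <= subset_bound j - INR b) by nra.
  lra.
Qed.

Lemma subset_sums_bounded_In s x :
  subset_sums_bounded s -> In x s -> INR x <= subset_bound 1.
Proof.
  intros Hinv Hx; destruct (In_nth _ _ 0%nat Hx) as [p [Hp <-]].
  destruct (masked_mask_insert p s nil Hp) as [Hsum Hcount]; simpl in Hsum, Hcount.
  rewrite <- (Nat.add_0_r (nth p s 0%nat)), <- Hsum, <- Hcount; apply Hinv; lia.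
Qed.

End Invariant.

Theorem mainTheorem6 (N b k k' : nat) (hN : (1 <= N)%nat) (hb : (1 <= b)%nat)
  (hk : (k' < k)%nat)
  (hbk : (INR b < (INR k - INR k') / (ln (INR N) + 1))%R)
  (play : nat -> list nat)
  (h0 : length (play 0%nat) = N)
  (hinit : Forall (fun x => (x <= k')%nat) (play 0%nat))
  (hstep : forall t : nat, (t < N)%nat -> game_round b (play t) (play (S t))) :
  forall t : nat, (t <= N)%nat -> Forall (fun x => (x < k)%nat) (play t).
Proof.
  assert (Hinv : forall t, (t <= N)%nat -> subset_sums_bounded N b k' (play t)).
  { induction t as [|t IH]; intros Ht.
    - apply subset_sums_bounded_init; assumption.
    - apply subset_sums_bounded_round with (play t); [apply IH | apply hstep]; lia. }
  assert (Hln : 0 < ln (INR N) + 1).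
  { assert (1 <= INR N) by (apply (le_INR 1); lia).
    destruct (Req_dec (INR N) 1) as [-> | HN1]; [rewrite ln_1; lra|].
    rewrite <- ln_1; pose proof (ln_increasing 1 (INR N) ltac:(lra) ltac:(lra)); lra. }
  assert (Hbk : INR b * harmonic (N - 1) < INR k - INR k').
  { apply Rle_lt_trans with (INR b * (ln (INR N) + 1)).
    - apply Rmult_le_compat_l; [apply pos_INR | apply harmonic_pred_le_ln_add1, hN].
    - apply Rmult_lt_compat_r with (r := ln (INR N) + 1) in hbk; [|exact Hln].
      unfold Rdiv in hbk; rewrite Rmult_assoc, Rinv_l in hbk; lra. }
  intros t Ht; apply Forall_forall; intros x Hx.
  pose proof (subset_sums_bounded_In _ _ _ _ _ (Hinv t Ht) Hx) as Hxb.
  rewrite subset_bound_one in Hxb.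
  apply INR_lt; lra.
Qed.
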